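(* Let $\beta\in V_A\setminus\{\emptyset\}$ and $\nu\in\beta V_A$ with $\mathfrak c(\nu_{|\nu|})\ge2$. Choose a bijection $\iota_\nu:\{1,\dots,\mathfrak c(\nu_{|\nu|})\}\to\mathfrak C(\nu_{|\nu|})$ and set $q_m=\sum_{k=1}^mP_{\nu_{|\nu|},\iota_\nu(k)}$. For $j\in\{1,\dots,\mathfrak c(\nu_{|\nu|})-1\}$ define $a^{(\nu,j)}\in\mathbb R^{\mathfrak c(\nu_{|\nu|})}$ by $$a^{(\nu,j)}_k=\begin{cases}\Bigl(\frac{P_{\nu_{|\nu|},\iota_\nu(j+1)}}{\mu_c(C(\nu))q_jq_{j+1}}\Bigr)^{1/2},&1\le k\le j,\\ -\Bigl(\frac{q_j}{\mu_c(C(\nu))q_{j+1}P_{\nu_{|\nu|},\iota_\nu(j+1)}}\Bigr)^{1/2},&k=j+1,\\ 0,&k\ge j+2,\end{cases}$$ and $h_{\nu,j}=\sum_{k=1}^{\mathfrak c(\nu_{|\nu|})}a^{(\nu,j)}_k\chi_{C(\nu\iota_\nu(k))}$. Then: (1) $h_{\nu,j}$ is supported on $C(\nu)$ and constant on each $C(\nu i)$, $i\in\mathfrak C(\nu_{|\nu|})$; (2) $\int_{\Omega_A}h_{\nu,j}\,d\mu_c=0$; (3) $\langle h_{\nu,j},h_{\nu,j'}\rangle_{L^2(\Omega_A,\mu_c)}=\delta_{j,j'}$; (4) $\{\mu_c(C(\nu))^{-1/2}\chi_{C(\nu)}\}\cup\{h_{\nu,j}:1\le j\le\mathfrak c(\nu_{|\nu|})-1\}$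 is an orthonormal basis of the space of functions on $C(\nu)$ that are constant on each $C(\nu i)$.
   Context: $A\in M_N(\{0,1\})$ is primitive; $V_A$ is the set of admissible finite words (words $x_1\cdots x_k$ over $\{1,\dots,N\}$ with $A_{x_n,x_{n+1}}=1$), $\emptyset$ the empty word, $\beta V_A$ the admissible words starting with $\beta$. $\Omega_A$ is the space of infinite admissible sequences, $C(\alpha)$ the cylinder of sequences starting with $\alpha$, $\chi_S$ a characteristic function. $\lambda_A$ is the Perron–Frobenius eigenvalue, $u>0$ with $Au=\lambda_Au$, $\sum u_i=1$; $P_{i,j}=A_{i,j}u_j/(\lambda_Au_i)$. $\mathfrak C(i)=\{j:A_{i,j}=1\}$, $\mathfrak c(i)=\#\mathfrak C(i)$. $\mu_c$ is the Borel probability measure on $\Omega_A$ with $\mu_c(C(\alpha_1\cdots\alpha_n))=u_{\alpha_n}\lambda_A^{-(n-1)}$. *)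

From HB Require Import structures.
From mathcomp Require Import all_boot all_order all_algebra.
From mathcomp Require Import all_classical all_reals all_analysis.
Set Implicit Arguments. Unset Strict Implicit. Unset Printing Implicit Defensive.
Import Order.TTheory GRing.Theory Num.Theory.
Local Open Scope classical_set_scope.
Local Open Scope ring_scope.

(* The alphabet {1,...,N} is represented by 'I_n.+1 (N = n+1, letters 0..n). *)

Definition seqspace (n : nat) := nat -> 'I_n.+1.
HB.instance Definition _ (n : nat) := Choice.on (seqspace n).
HB.instance Definition _ (n : nat) := isPointed.Build (seqspace n) (fun _ => ord0).

Section SFT.
Variables (R : realType) (n : nat).
Implicit Types (A : 'M[R]_n.+1).

Definition zero_one_mx A := forall i j, A i j = 0 \/ A i j = 1.

Definition mxpow A (k : nat) : 'M[R]_n.+1 := iter k (fun B => A *m B) 1%:M.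

Definition primitive_mx A := exists2 k, (0 < k)%N & forall i j, 0 < mxpow A k i j.

Definition admissible A (w : seq 'I_n.+1) := sorted (fun a b => A a b == 1) w.

Definition adm_seq A (x : seqspace n) := forall k, A (x k) (x k.+1) = 1.

Definition cyl A (alpha : seq 'I_n.+1) : set (seqspace n) :=
  [set x | adm_seq A x /\ forall k, (k < size alpha)%N -> x k = nth ord0 alpha k].

Definition Omega A := g_sigma_algebraType (range (cyl A)).

Definition children A (i : 'I_n.+1) : {set 'I_n.+1} := [set j | A i j == 1].
Definition nchildren A (i : 'I_n.+1) : nat := #|children A i|.

Definition Pmat A (lam : R) (u : 'I_n.+1 -> R) (i j : 'I_n.+1) : R :=
  A i j * u j / (lam * u i).

Definition ip A (mu : {measure set (Omega A) -> \bar R}) (f g : Omega A -> R) : \bar R :=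
  (\int[mu]_x (f x * g x)%:E)%E.

(* functions on Omega_A supported on C(nu) and constant on each C(nu i),
   i in \mathfrak C(nu_{|nu|}) (functions on Omega_A are identified with
   functions on the ambient sequence space vanishing outside Omega_A) *)
Definition loc_const_space A (nu : seq 'I_n.+1) (f : Omega A -> R) : Prop :=
  (forall x, ~ cyl A nu x -> f x = 0) /\
  (forall i, i \in children A (last ord0 nu) ->
     forall x y, cyl A (rcons nu i) x -> cyl A (rcons nu i) y -> f x = f y).

(* q_m = sum_{k=1}^m P_{nu_{|nu|}, iota(k)}; here iota is 0-indexed on 'I_c,
   so q_m = sum over 0-based k < m. *)
Definition qsum (c : nat) (P : 'I_n.+1 -> 'I_n.+1 -> R) (l : 'I_n.+1)
  (iota : 'I_c -> 'I_n.+1) (m : nat) : R :=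
  \sum_(k < c | (k < m)%N) P l (iota k).

(* coefficient a^{(nu,j)}_k, with 0-based j, k : 'I_c
   (0-based j corresponds to the paper's j, since the paper's iota(j+1) is
    our iota j; 0-based k corresponds to the paper's k+1). *)
Definition acoef (c : nat) (P : 'I_n.+1 -> 'I_n.+1 -> R) (l : 'I_n.+1)
  (iota : 'I_c -> 'I_n.+1) (mc : R) (j k : 'I_c) : R :=
  let q := qsum P l iota in
  let p := P l (iota j) in
  if (k < j)%N then Num.sqrt (p / (mc * q j * q j.+1))
  else if k == j then - Num.sqrt (q j / (mc * q j.+1 * p))
  else 0.

Definition hfun A (nu : seq 'I_n.+1) (c : nat) (P : 'I_n.+1 -> 'I_n.+1 -> R)
  (iota : 'I_c -> 'I_n.+1) (mc : R) (j : 'I_c) (x : Omega A) : R :=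
  \sum_(k < c) acoef P (last ord0 nu) iota mc j k * \1_(cyl A (rcons nu (iota k))) x.

End SFT.

From HB Require Import structures.
From mathcomp Require Import all_boot all_order all_algebra.
From mathcomp Require Import all_classical all_reals all_analysis.
From mathcomp Require Import ring.
Import Order.TTheory GRing.Theory Num.Theory.
Set Implicit Arguments. Unset Strict Implicit. Unset Printing Implicit Defensive.
Local Open Scope classical_set_scope.
Local Open Scope ring_scope.

(* The cylinders C(nu iota(k)) partition C(nu) and have measures
   w_k = mu_c(C(nu)) P_{nu_|nu|, iota(k)}, so integrals and L^2 inner products of
   step functions sum_k b_k chi_{C(nu iota(k))} are w-weighted sums over their
   coefficients, and every function constant on the C(nu i) is such a step
   function.  Everything thus reduces to the vectors a^(nu,j): a^(nu,j) takes a
   single value on its first j coordinates, which makes its w-sum vanish and its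
   w-norm (q_j + P_{nu_|nu|, iota(j+1)}) / q_(j+1) = 1, while for j < j' the
   vector a^(nu,j') is constant on the support of a^(nu,j).  The constant vector
   mu_c(C(nu))^(-1/2) has w-norm 1 because the rows of P sum to 1, and c
   w-orthonormal vectors of R^c form a basis. *)

Lemma sqrtrM_sqr (R : rcfType) (x y : R) :
  0 <= x -> 0 <= y -> Num.sqrt x * y = Num.sqrt (x * y ^+ 2).
Proof. by move=> x0 y0; rewrite sqrtrM // sqrtr_sqr ger0_norm. Qed.

(* For the square matrix M of the family, M diag(w) M^T = 1 forces
   diag(w) M^T M = 1. *)
Lemma weighted_orthonormal_span (R : fieldType) (c : nat)
    (F : 'I_c -> 'I_c -> R) (w : 'I_c -> R) :
  (forall i j, \sum_k F i k * F j k * w k = (i == j)%:R) ->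
  forall b : 'I_c -> R, exists cs : 'I_c -> R, forall k, b k = \sum_j cs j * F j k.
Proof.
move=> F_on b.
pose M : 'M[R]_c := \matrix_(i, k) F i k.
pose B : 'M[R]_c := \matrix_(k, j) (w k * F j k).
have MB : M *m B = 1%:M.
  apply/matrixP => i j; rewrite !mxE -F_on.
  by apply: eq_bigr => k _; rewrite !mxE [w k * _]mulrC mulrA.
exists (fun j => (\row_k b k *m B) ord0 j); move=> k.
have -> : b k = (\row_k b k *m B *m M) ord0 k.
  by rewrite -mulmxA (mulmx1C MB) mulmx1 mxE.
by rewrite mxE; apply: eq_bigr => j _; rewrite [M j k]mxE.
Qed.

Section HelmertCoefficients.
Variables (R : realType) (n c : nat) (P : 'I_n.+1 -> 'I_n.+1 -> R) (l : 'I_n.+1)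
  (iota : 'I_c -> 'I_n.+1) (mc : R).
Hypothesis P_gt0 : forall k, 0 < P l (iota k).
Hypothesis mc_gt0 : 0 < mc.
Local Notation p k := (P l (iota k)).
Local Notation q := (qsum P l iota).
Local Notation a := (acoef P l iota mc).

Lemma qsumS (j : 'I_c) : q j.+1 = q j + p j.
Proof.
rewrite /qsum (bigD1 j) //= addrC; congr (_ + _).
by apply: eq_bigl => k; rewrite ltnS ltn_neqAle andbC.
Qed.

Lemma qsum_gt0 (j : 'I_c) : (0 < j)%N -> 0 < q j.
Proof.
move=> j_gt0; pose k0 : 'I_c := Ordinal (ltn_trans j_gt0 (ltn_ord j)).
rewrite /qsum (bigD1 k0) //= ltr_wpDr //.
by apply: sumr_ge0 => k _; apply/ltW.
Qed.

Lemma acoef_lt (j k : 'I_c) :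
  (k < j)%N -> a j k = Num.sqrt (p j / (mc * q j * q j.+1)).
Proof. by rewrite /acoef => ->. Qed.

Lemma sum_acoef_mul (j : 'I_c) (g : 'I_c -> R) :
  \sum_k a j k * g k =
    Num.sqrt (p j / (mc * q j * q j.+1)) * \sum_(k : 'I_c | (k < j)%N) g k
    - Num.sqrt (q j / (mc * q j.+1 * p j)) * g j.
Proof.
rewrite (bigID (fun k : 'I_c => (k < j)%N)) /= mulr_sumr; congr (_ + _).
  by apply: eq_bigr => k /acoef_lt ->.
rewrite (bigD1 j) ?ltnn //= big1 ?addr0 => [|k /andP[/negbTE kj /negbTE kj']].
  by rewrite /acoef ltnn eqxx mulNr.
by rewrite /acoef kj kj' mul0r.
Qed.

Lemma acoef_weighted_sum0 (j : 'I_c) :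
  (0 < j)%N -> \sum_k a j k * (mc * p k) = 0.
Proof.
move=> j_gt0; have q_gt0 := qsum_gt0 j_gt0; have p_gt0 := P_gt0 j.
have q1_gt0 : 0 < q j.+1 by rewrite qsumS addr_gt0.
rewrite sum_acoef_mul -mulr_sumr -/(q j); apply/eqP; rewrite subr_eq0; apply/eqP.
rewrite !sqrtrM_sqr ?divr_ge0 ?mulr_ge0 ?ltW //; congr Num.sqrt.
by field; rewrite !gt_eqF.
Qed.

Lemma acoef_diag (j : 'I_c) : a j j = - Num.sqrt (q j / (mc * q j.+1 * p j)).
Proof. by rewrite /acoef ltnn eqxx. Qed.

Lemma acoef_weighted_norm1 (j : 'I_c) :
  (0 < j)%N -> \sum_k a j k * a j k * (mc * p k) = 1.
Proof.
move=> j_gt0; have q_gt0 := qsum_gt0 j_gt0; have p_gt0 := P_gt0 j.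
have q1_gt0 : 0 < q j.+1 by rewrite qsumS addr_gt0.
under eq_bigr do rewrite -mulrA.
rewrite sum_acoef_mul acoef_diag.
rewrite (eq_bigr (fun k => Num.sqrt (p j / (mc * q j * q j.+1)) * (mc * p k)));
  last by move=> k /acoef_lt ->.
rewrite -!mulr_sumr -/(q j) mulNr mulrN opprK !mulrA -!expr2.
rewrite !sqr_sqrtr ?divr_ge0 ?mulr_ge0 ?ltW // qsumS.
by field; rewrite !gt_eqF // addr_gt0.
Qed.

Lemma acoef_weighted_orth (j j' : 'I_c) :
  (0 < j)%N -> (j < j')%N -> \sum_k a j k * a j' k * (mc * p k) = 0.
Proof.
move=> j_gt0 jj'.
rewrite (eq_bigr (fun k =>
  Num.sqrt (p j' / (mc * q j' * q j'.+1)) * (a j k * (mc * p k)))).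
  by rewrite -mulr_sumr acoef_weighted_sum0 ?mulr0.
move=> k _; have [jk|kj] := ltnP j k.
  by rewrite /acoef ltnNge (ltnW jk) -val_eqE (gtn_eqF jk) !mul0r mulr0.
by rewrite (@acoef_lt j' k (leq_ltn_trans kj jj')) [a j k * _]mulrC [RHS]mulrA.
Qed.

Lemma acoef_weighted_dot (i j : 'I_c) : (0 < i)%N -> (0 < j)%N ->
  \sum_k a i k * a j k * (mc * p k) = (i == j)%:R.
Proof.
move=> i_gt0 j_gt0; have [ij|ji|/val_inj ->] := ltngtP i j.
- by rewrite acoef_weighted_orth // -val_eqE (ltn_eqF ij).
- under eq_bigr do rewrite [a i _ * _]mulrC.
  by rewrite acoef_weighted_orth // -val_eqE (gtn_eqF ji).
- by rewrite acoef_weighted_norm1 // eqxx.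
Qed.

Hypothesis P_sum : \sum_k p k = 1.
Local Notation s := (Num.sqrt mc)^-1.

Lemma const_weighted_norm1 : \sum_(k : 'I_c) s * s * (mc * p k) = 1.
Proof.
rewrite -!mulr_sumr P_sum mulr1 -expr2 exprVn sqr_sqrtr ?ltW //.
by rewrite mulVf // gt_eqF.
Qed.

Lemma const_acoef_weighted_orth (j : 'I_c) :
  (0 < j)%N -> \sum_k s * a j k * (mc * p k) = 0.
Proof.
move=> j_gt0; under eq_bigr do rewrite -mulrA.
by rewrite -mulr_sumr acoef_weighted_sum0 ?mulr0.
Qed.

Lemma acoef_span (b : 'I_c -> R) : (0 < c)%N ->
  exists (c0 : R) (cs : 'I_c -> R),
    forall k, b k = c0 * s + \sum_(j < c | (0 < j)%N) cs j * a j k.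
Proof.
move=> c_gt0; pose F (j k : 'I_c) := if (0 < j)%N then a j k else s.
have F_on i j : \sum_k F i k * F j k * (mc * p k) = (i == j)%:R.
  rewrite /F; case: (posnP i) => [i0|i_gt0]; case: (posnP j) => [j0|j_gt0].
  - rewrite const_weighted_norm1 (_ : i = j) ?eqxx //.
    by apply: val_inj; rewrite /= i0 j0.
  - by rewrite const_acoef_weighted_orth // -val_eqE /= i0 (ltn_eqF j_gt0).
  - under eq_bigr do rewrite [a i _ * _]mulrC.
    by rewrite const_acoef_weighted_orth // -val_eqE /= j0 (gtn_eqF i_gt0).
  - exact: acoef_weighted_dot.
have [cs b_span] := weighted_orthonormal_span F_on b.
exists (cs (Ordinal c_gt0)), cs => k; rewrite b_span.
rewrite (bigD1 (Ordinal c_gt0)) //= /F ltnn; congr (_ + _).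
apply: eq_big => [j|j j_gt0]; first by rewrite -val_eqE /= lt0n.
by move: j_gt0; rewrite -val_eqE /= -lt0n => ->.
Qed.
End HelmertCoefficients.

Lemma integral_sum_indic d (T : measurableType d) (R : realType)
    (mu : {finite_measure set T -> \bar R}) (c : nat) (b w : 'I_c -> R)
    (S : 'I_c -> set T) :
  (forall k, measurable (S k)) -> (forall k, mu (S k) = (w k)%:E) ->
  (\int[mu]_x (\sum_k b k * \1_(S k) x)%:E = (\sum_k b k * w k)%:E)%E.
Proof.
move=> mS muS; under eq_integral do rewrite -sumEFin.
rewrite integral_sum //; last first.
  move=> k; under eq_fun do rewrite EFinM.
  by apply: integrableZl => //; apply: integrable_indic.
rewrite -sumEFin; apply: eq_bigr => k _.
under eq_integral do rewrite EFinM.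
rewrite integralZl ?integral_indic ?setIT //; last by apply: integrable_indic.
by rewrite EFinM; congr (_ * _)%E; exact: muS.
Qed.

Section Cylinders.
Variables (R : realType) (n : nat) (A : 'M[R]_n.+1).

Lemma cyl_measurable (alpha : seq 'I_n.+1) : measurable (cyl A alpha : set (Omega A)).
Proof. by apply: sub_sigma_algebra; exists alpha. Qed.

Lemma cyl_rcons_sub alpha i : cyl A (rcons alpha i) `<=` cyl A alpha.
Proof.
move=> x [x_adm x_pre]; split => // m m_lt.
by rewrite x_pre ?nth_rcons ?m_lt // size_rcons ltnS ltnW.
Qed.

Lemma cyl_rcons_at alpha i x : cyl A (rcons alpha i) x -> x (size alpha) = i.
Proof. by move=> [_ x_pre]; rewrite x_pre ?size_rcons // nth_rcons ltnn eqxx. Qed.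

Lemma cyl_rcons_next alpha x : alpha != [::] -> cyl A alpha x ->
  x (size alpha) \in children A (last ord0 alpha) /\
  cyl A (rcons alpha (x (size alpha))) x.
Proof.
move=> alpha_ne [x_adm x_pre].
have alpha_gt0 : (0 < size alpha)%N by rewrite lt0n size_eq0.
split.
  rewrite inE; apply/eqP; have := x_adm (size alpha).-1.
  by rewrite prednK // x_pre ?prednK // nth_last.
split => // m; rewrite size_rcons ltnS leq_eqVlt nth_rcons => /orP[/eqP->|m_lt].
  by rewrite ltnn eqxx.
by rewrite m_lt x_pre.
Qed.

Lemma admissible_rcons alpha i :
  admissible A alpha -> A (last ord0 alpha) i = 1 -> admissible A (rcons alpha i).
Proof. by case: alpha => // a t; rewrite /admissible /= rcons_path => -> /= ->. Qed.

End Cylinders.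

Section PerronWeights.
Variables (R : realType) (n : nat) (A : 'M[R]_n.+1) (lam : R) (u : 'I_n.+1 -> R).
Hypothesis A01 : zero_one_mx A.
Hypothesis u_gt0 : forall i, 0 < u i.
Hypothesis u_eig : forall i, \sum_j A i j * u j = lam * u i.

Lemma eigenvalue_gt0 i j : A i j = 1 -> 0 < lam.
Proof.
move=> Aij; have : 0 < lam * u i.
  rewrite -u_eig (bigD1 j) //= Aij mul1r ltr_wpDr // sumr_ge0 // => k _.
  by rewrite mulr_ge0 ?(ltW (u_gt0 k)) //; case: (A01 i k) => ->.
by rewrite pmulr_lgt0.
Qed.

Lemma Pmat_row_sum i : lam != 0 -> \sum_j Pmat A lam u i j = 1.
Proof.
by move=> lam_neq0; rewrite /Pmat -mulr_suml u_eig mulfV // mulf_neq0 // gt_eqF.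
Qed.

Lemma Pmat_children_sum i :
  lam != 0 -> \sum_(j in children A i) Pmat A lam u i j = 1.
Proof.
move=> lam_neq0.
rewrite -(Pmat_row_sum i lam_neq0) [RHS](bigID (mem (children A i))) /=.
rewrite [X in _ = _ + X]big1 ?addr0 // => j; rewrite inE /Pmat.
by case: (A01 i j) => ->; rewrite ?eqxx // !mul0r.
Qed.

Variable mu : {measure set (Omega A) -> \bar R}.
Hypothesis mu_cyl : forall alpha : seq 'I_n.+1, alpha != [::] -> admissible A alpha ->
  mu (cyl A alpha) = (u (last ord0 alpha) * lam ^- (size alpha).-1)%:E.

Lemma cyl_measure_gt0 alpha : alpha != [::] -> admissible A alpha -> 0 < lam ->
  0 < fine (mu (cyl A alpha)).
Proof.
by move=> alpha_ne alpha_adm lam_gt0; rewrite mu_cyl //= mulr_gt0 ?invr_gt0 ?exprn_gt0.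
Qed.

Lemma measure_cyl_rcons alpha i : alpha != [::] -> admissible A alpha ->
    A (last ord0 alpha) i = 1 -> lam != 0 ->
  mu (cyl A (rcons alpha i)) =
    (fine (mu (cyl A alpha)) * Pmat A lam u (last ord0 alpha) i)%:E.
Proof.
move=> alpha_ne alpha_adm Ai lam_neq0.
rewrite mu_cyl ?admissible_rcons //; last by case: (alpha).
rewrite mu_cyl // last_rcons size_rcons /Pmat Ai mul1r.
case: alpha alpha_ne {alpha_adm Ai} => // a t _ /=.
by rewrite exprS invfM; congr (_%:E); field; rewrite lam_neq0 expf_neq0 // gt_eqF.
Qed.

End PerronWeights.

Section CylinderStep.
Variables (R : realType) (n : nat) (A : 'M[R]_n.+1) (nu : seq 'I_n.+1)
  (c : nat) (iota : 'I_c -> 'I_n.+1).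
Hypothesis nu_ne : nu != [::].
Hypothesis iota_in : forall k, iota k \in children A (last ord0 nu).
Hypothesis iota_onto : forall i, i \in children A (last ord0 nu) -> exists k, iota k = i.
Hypothesis iota_inj : injective iota.
Local Notation C k := (cyl A (rcons nu (iota k))).

Lemma sum_children_iota (F : 'I_n.+1 -> R) :
  \sum_k F (iota k) = \sum_(j in children A (last ord0 nu)) F j.
Proof.
have -> : children A (last ord0 nu) = iota @: [set: 'I_c].
  apply/setP => i; apply/idP/imsetP => [/iota_onto[k <-]|[k _ ->]//].
  by exists k; rewrite ?in_setT.
rewrite big_imset /=; last by move=> ? ? _ _; apply: iota_inj.
by apply: eq_bigl => k; rewrite in_setT.
Qed.

Definition cyl_step (b : 'I_c -> R) (x : Omega A) : R := \sum_k b k * \1_(C k) x.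

Lemma cyl_step_at b k x : C k x -> cyl_step b x = b k.
Proof.
move=> x_C; rewrite /cyl_step (bigD1 k) //= indicE mem_set // mulr1.
rewrite big1 ?addr0 // => k' k'_neq.
rewrite indicE memNset ?mulr0 // => x_C'; move/eqP: k'_neq; apply.
by apply: iota_inj; rewrite -(cyl_rcons_at x_C) (cyl_rcons_at x_C').
Qed.

Lemma cyl_step_out b x : ~ cyl A nu x -> cyl_step b x = 0.
Proof.
move=> x_nu; rewrite /cyl_step big1 // => k _.
by rewrite indicE memNset ?mulr0 // => /cyl_rcons_sub.
Qed.

Variant cyl_step_spec (x : Omega A) : Prop :=
  | CylStepOut of ~ cyl A nu x & forall b, cyl_step b x = 0
  | CylStepIn k of C k x & forall b, cyl_step b x = b k.

Lemma cyl_stepP x : cyl_step_spec x.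
Proof.
have [x_nu|x_nu] := pselect (cyl A nu x); last first.
  by apply: CylStepOut => // b; apply: cyl_step_out.
have [/iota_onto[k kE] x_C] := cyl_rcons_next nu_ne x_nu.
by rewrite -kE in x_C; apply: (CylStepIn x_C) => b; apply: cyl_step_at.
Qed.

Lemma cyl_step_const r x : cyl_step (fun=> r) x = r * \1_(cyl A nu) x.
Proof.
case: (cyl_stepP x) => [x_nu ->|k x_C ->]; rewrite indicE.
  by rewrite memNset ?mulr0.
by rewrite mem_set ?mulr1 //; apply: cyl_rcons_sub x_C.
Qed.

Lemma cyl_stepM b b' x :
  cyl_step b x * cyl_step b' x = cyl_step (fun k => b k * b' k) x.
Proof. by case: (cyl_stepP x) => [_ E|k _ E]; rewrite !E ?mul0r. Qed.

Lemma cyl_stepD b b' x :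
  cyl_step (fun k => b k + b' k) x = cyl_step b x + cyl_step b' x.
Proof. by rewrite /cyl_step -big_split; apply: eq_bigr => k _; rewrite mulrDl. Qed.

Lemma cyl_step_sum (I : finType) (P : pred I) (cs : I -> R) (B : I -> 'I_c -> R) x :
  cyl_step (fun k => \sum_(j | P j) cs j * B j k) x =
  \sum_(j | P j) cs j * cyl_step (B j) x.
Proof.
rewrite /cyl_step; under eq_bigr do rewrite mulr_suml; rewrite exchange_big /=.
by apply: eq_bigr => j _; rewrite mulr_sumr; apply: eq_bigr => k _; rewrite -mulrA.
Qed.

Lemma loc_const_space_cyl_step b : loc_const_space nu (cyl_step b).
Proof.
split=> [x|_ /iota_onto[k <-] x y x_C y_C]; first exact: cyl_step_out.
by rewrite (cyl_step_at _ x_C) (cyl_step_at _ y_C).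
Qed.

Lemma loc_const_space_cyl_stepE (f : Omega A -> R) :
  loc_const_space nu f -> exists b, forall x, f x = cyl_step b x.
Proof.
move=> [f_out f_const]; exists (fun k => f (xget (fun=> ord0) (C k))) => x.
case: (cyl_stepP x) => [x_nu ->|k x_C ->]; first exact: f_out.
by apply: (f_const _ (iota_in k) _ _ x_C); apply: xgetPex; exists x.
Qed.

Variables (mu : {finite_measure set (Omega A) -> \bar R}) (w : 'I_c -> R).
Hypothesis mu_C : forall k, mu (C k) = (w k)%:E.

Lemma integral_cyl_step b :
  (\int[mu]_x (cyl_step b x)%:E = (\sum_k b k * w k)%:E)%E.
Proof. by apply: integral_sum_indic => // k; apply: cyl_measurable. Qed.

Lemma ip_cyl_step b b' :
  ip mu (cyl_step b) (cyl_step b') = (\sum_k b k * b' k * w k)%:E.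
Proof.
by rewrite /ip; under eq_integral do rewrite cyl_stepM; apply: integral_cyl_step.
Qed.

End CylinderStep.

Theorem proposition4p1 (R : realType) (n : nat) (A : 'M[R]_n.+1) (lam : R)
    (u : 'I_n.+1 -> R)
    (A01 : zero_one_mx A) (Aprim : primitive_mx A)
    (upos : forall i, 0 < u i) (usum : \sum_i u i = 1)
    (ueig : forall i, \sum_j A i j * u j = lam * u i)
    (mu : probability (Omega A) R)
    (mu_cyl : forall alpha : seq 'I_n.+1, alpha != [::] -> admissible A alpha ->
       mu (cyl A alpha) = (u (last ord0 alpha) * lam ^- (size alpha).-1)%:E)
    (beta nu : seq 'I_n.+1)
    (beta_ne : beta != [::]) (beta_adm : admissible A beta)
    (nu_adm : admissible A nu) (nu_beta : prefix beta nu)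
    (c2 : (2 <= nchildren A (last ord0 nu))%N)
    (iota : 'I_(nchildren A (last ord0 nu)) -> 'I_n.+1)
    (iota_in : forall k, iota k \in children A (last ord0 nu))
    (iota_onto : forall i, i \in children A (last ord0 nu) -> exists k, iota k = i)
    (iota_inj : injective iota) :
  let mc := fine (mu (cyl A nu)) in
  let P := Pmat A lam u in
  let h := hfun (A:=A) nu P iota mc in
  let e0 := fun x : Omega A => (Num.sqrt mc)^-1 * \1_(cyl A nu) x in
  (* (1) *)
  (forall j : 'I_(nchildren A (last ord0 nu)), (0 < j)%N -> loc_const_space nu (h j)) /\
  (* (2) *)
  (forall j : 'I_(nchildren A (last ord0 nu)), (0 < j)%N -> (\int[mu]_x (h j x)%:E = 0)%E) /\
  (* (3) *)
  (forall j j' : 'I_(nchildren A (last ord0 nu)), (0 < j)%N -> (0 < j')%N ->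
     ip mu (h j) (h j') = ((j == j')%:R)%:E) /\
  (* (4) orthonormal basis *)
  (loc_const_space nu e0 /\ ip mu e0 e0 = 1%E /\
   (forall j : 'I_(nchildren A (last ord0 nu)), (0 < j)%N -> ip mu e0 (h j) = 0%E) /\
   (forall j j' : 'I_(nchildren A (last ord0 nu)), (0 < j)%N -> (0 < j')%N ->
     ip mu (h j) (h j') = ((j == j')%:R)%:E) /\
   (forall f : Omega A -> R, loc_const_space nu f ->
     exists (c0 : R) (cs : 'I_(nchildren A (last ord0 nu)) -> R),
       forall x, f x = c0 * e0 x + \sum_(j < nchildren A (last ord0 nu) | (0 < j)%N) cs j * h j x)).
Proof.
move=> mc P h e0.
have nu_ne : nu != [::] by move: nu_beta beta_ne; case: (beta) => // b bs; case: (nu).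
have edge k : A (last ord0 nu) (iota k) = 1 by have := iota_in k; rewrite inE => /eqP.
have lam_gt0 : 0 < lam.
  exact: eigenvalue_gt0 A01 upos ueig _ _ (edge (Ordinal (ltnW c2))).
have mc_gt0 : 0 < mc by apply: (cyl_measure_gt0 upos mu_cyl).
have P_gt0 k : 0 < P (last ord0 nu) (iota k).
  by rewrite /P /Pmat edge mul1r divr_gt0 ?mulr_gt0 ?upos.
have P_sum : \sum_k P (last ord0 nu) (iota k) = 1.
  by rewrite (sum_children_iota iota_in) // Pmat_children_sum ?gt_eqF.
have mu_C k : mu (cyl A (rcons nu (iota k))) = (mc * P (last ord0 nu) (iota k))%:E.
  by rewrite (measure_cyl_rcons upos mu_cyl) ?edge ?gt_eqF.
have ipE := ip_cyl_step nu_ne iota_onto iota_inj mu_C.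
have e0E : e0 = cyl_step nu iota (fun=> (Num.sqrt mc)^-1).
  by apply: funext => x; rewrite cyl_step_const.
have h_orthonormal (j j' : 'I_(nchildren A (last ord0 nu))) :
    (0 < j)%N -> (0 < j')%N -> ip mu (h j) (h j') = ((j == j')%:R)%:E.
  by move=> j_gt0 j'_gt0; rewrite ipE acoef_weighted_dot.
split; first by move=> j _; apply: loc_const_space_cyl_step.
split; first by move=> j j_gt0; rewrite (integral_cyl_step mu_C) acoef_weighted_sum0.
split=> //; rewrite e0E; split; first exact: loc_const_space_cyl_step.
split; first by rewrite ipE const_weighted_norm1.
split; first by move=> j j_gt0; rewrite ipE const_acoef_weighted_orth.
split=> // f /(loc_const_space_cyl_stepE nu_ne iota_in iota_onto iota_inj) [b fE].
have [c0 [cs /funext bE]] := acoef_span P_gt0 mc_gt0 P_sum b (ltnW c2).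
by exists c0, cs => x; rewrite fE bE cyl_stepD cyl_step_sum !cyl_step_const // mulrA.
Qed.
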